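(* Let $u_{1,\theta_1}(z,r,t)$ and $u_{2,\theta_2}(z,r,t)$ be neural networks with parameters $\theta=(\theta_1,\theta_2)$. Define the ideal second-order MeanFlow loss $$L^*_{\mathrm{SOM}}(\theta)=\mathbb{E}_{t,r,z_t}\big[\|u_{1,\theta_1}(z_t,r,t)-\overline{v}(z_t,r,t)\|_2^2\big]+\mathbb{E}_{t,r,z_t}\big[\|u_{2,\theta_2}(z_t,r,t)-\overline{a}(z_t,r,t)\|_2^2\big],$$ with $t,r\sim\mathrm{Uniform}[0,1]$ and $z_t\sim p_t$, where $\overline{v}(z_t,r,t)=\frac{1}{t-r}\int_r^t v(z_\tau,\tau)\,\mathrm{d}\tau$ and $\overline{a}(z_t,r,t)=\frac{1}{t-r}\int_r^t a(z_\tau,\tau)\,\mathrm{d}\tau$. Define the second-order MeanFlow loss $$L_{\mathrm{SOM}}(\theta)=\mathbb{E}_{t,r,x,\epsilon}\big[\|u_{1,\theta_1}(z_t,r,t)-\overline{v}(z_t,r,t)\|_2^2\big]+\mathbb{E}_{t,r,x,\epsilon}\big[\|u_{2,\theta_2}(z_t,r,t)-\overline{a}(z_t,r,t)\|_2^2\big],$$ with $t,r\sim\mathrm{Uniform}[0,1]$, $x\sim p_{\mathrm{data}}$, $\epsilon\sim\mathcal{N}(\mu,\sigma^2I_d)$, $z_t=\alpha_t x+\beta_t\epsilon$, in which the targets (treated with a stop-gradient, i.e. not differentiated with respect to $\theta$) are computed through the relations $$\overline{v}(z_t,r,t)=v(z_t,t)-(t-r)\tfrac{\mathrm{d}}{\mathrm{d}t}\overline{v}(z_t,r,t),\qquad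 \overline{a}(z_t,r,t)=a(z_t,t)-(t-r)\tfrac{\mathrm{d}}{\mathrm{d}t}\overline{a}(z_t,r,t).$$ Then $L_{\mathrm{SOM}}(\theta)$ is equivalent to $L^*_{\mathrm{SOM}}(\theta)$.
   Context: Setting: $t\in[0,1]$; $\alpha_t,\beta_t:[0,1]\to\mathbb{R}$ are (twice differentiable) interpolation functions with $\alpha_0=\beta_1=1$, $\alpha_1=\beta_0=0$; $x\sim p_{\mathrm{data}}$ on $\mathbb{R}^d$, $\epsilon\sim\mathcal{N}(\mu,\sigma^2 I_d)$; trajectory $z_t=\alpha_t x+\beta_t\epsilon$, whose law is denoted $p_t$; conditional velocity $v_t=\frac{\mathrm{d}z_t}{\mathrm{d}t}$, conditional acceleration $a_t=\frac{\mathrm{d}^2z_t}{\mathrm{d}t^2}$; marginal velocity $v(z,t)=\mathbb{E}[v_t\mid z_t=z]$ and marginal acceleration $a(z,t)=\mathbb{E}[a_t\mid z_t=z]$. In the averages, $\tau\mapsto z_\tau$ is the trajectory through $z_t$ (with $\frac{\mathrm{d}z_\tau}{\mathrm{d}\tau}=v(z_\tau,\tau)$), and $\frac{\mathrm{d}}{\mathrm{d}t}$ is the total derivative in $t$ with $r$ held fixed. Functions are assumed sufficiently smooth. Two losses are called equivalent if they differ by a constant independent of $\theta$, i.e. they have the same gradient with respect to $\theta$. *)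

From HB Require Import structures.
From mathcomp Require Import all_boot all_order all_algebra.
From mathcomp Require Import all_classical all_reals all_analysis.
Set Implicit Arguments. Unset Strict Implicit. Unset Printing Implicit Defensive.
Import Order.TTheory GRing.Theory Num.Theory.
Import numFieldNormedType.Exports.
Local Open Scope classical_set_scope.
Local Open Scope ring_scope.

(* R^d is represented by d.-tuple R, which carries the product
   (coordinate-generated) sigma-algebra of MathComp-Analysis. *)
Section vectors.
Context {R : realType} {d : nat}.
Definition vadd (x y : d.-tuple R) : d.-tuple R := [tuple tnth x i + tnth y i | i < d].
Definition vsub (x y : d.-tuple R) : d.-tuple R := [tuple tnth x i - tnth y i | i < d].
Definition vscale (c : R) (x : d.-tuple R) : d.-tuple R := [tuple c * tnth x i | i < d].
Definition sqnorm (x : d.-tuple R) : R := \sum_(i < d) tnth x i ^+ 2.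
End vectors.

Definition oint {R : realType} (a b : R) (f : R -> R) : R :=
  if a <= b then Rintegral (@lebesgue_measure R) `[a, b] f
  else - Rintegral (@lebesgue_measure R) `[b, a] f.

Section flow_defs.
Context {R : realType} {d : nat}.
Implicit Types (w : d.-tuple R -> R -> d.-tuple R)
  (Phi : d.-tuple R -> R -> R -> d.-tuple R).

(* Phi z t tau = position at time tau of the trajectory of the marginal
   velocity field passing through z at time t. *)

(* average of the field w along the trajectory through z_t = z:
   wbar(z,r,t) = 1/(t-r) \int_r^t w(z_tau, tau) d tau,
   extended on the diagonal r = t by its limit w(z,t). *)
Definition avg_field w Phi (z : d.-tuple R) (r t : R) : d.-tuple R :=
  if r == t then w z t
  else [tuple (t - r)^-1 * oint r t (fun tau => tnth (w (Phi z t tau) tau) i) | i < d].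

(* the MeanFlow target  w(z_t,t) - (t - r) d/dt wbar(z_t,r,t),
   d/dt being the total derivative along the trajectory, r fixed *)
Definition mf_target w Phi (z : d.-tuple R) (r t : R) : d.-tuple R :=
  [tuple tnth (w z t) i
     - (t - r) * derive1 (fun s => tnth (avg_field w Phi (Phi z t s) r s) i) t | i < d].
End flow_defs.

Section prob_defs.
Context {R : realType} {dO : measure_display} {O : measurableType dO} {d : nat}.
Variable P : probability O R.

Definition cond_exp_version (Y Z : O -> d.-tuple R)
    (g : d.-tuple R -> d.-tuple R) : Prop :=
  measurable_fun [set: d.-tuple R] g /\
  forall i : 'I_d,
    P.-integrable [set: O] (fun om => (tnth (Y om) i)%:E) /\
    forall A : set (d.-tuple R), measurable A ->
      (\int[P]_(om in Z @^-1` A) (tnth (Y om) i)%:E =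
       \int[P]_(om in Z @^-1` A) (tnth (g (Z om)) i)%:E)%E.

(* Eps ~ N(mu, sigma^2 I_d): independent coordinates, Eps_i ~ N(mu_i, sigma^2) *)
Definition iso_gaussian (Eps : O -> d.-tuple R) (mu : d.-tuple R) (sigma : R) :=
  forall A : 'I_d -> set R, (forall i, measurable (A i)) ->
    P [set om | forall i, A i (tnth (Eps om) i)] =
    (\prod_(i < d) fine (normal_prob (tnth mu i) sigma (A i)))%:E.

Definition indep2 (X Y : O -> d.-tuple R) :=
  forall A B : set (d.-tuple R), measurable A -> measurable B ->
    P (X @^-1` A `&` Y @^-1` B) = (P (X @^-1` A) * P (Y @^-1` B))%E.
End prob_defs.

Definition interp {R : realType} {d : nat} {O : Type}
  (alpha beta : R -> R) (X Eps : O -> d.-tuple R) (t : R) : O -> d.-tuple R :=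
  fun om => vadd (vscale (alpha t) (X om)) (vscale (beta t) (Eps om)).

Definition L_SOM_star {R : realType} {d : nat} {dO} {O : measurableType dO}
  (P : probability O R) (alpha beta : R -> R) (X Eps : O -> d.-tuple R)
  (vbar abar : d.-tuple R -> R -> R -> d.-tuple R)
  (Th1 Th2 : Type) (u1 : Th1 -> d.-tuple R -> R -> R -> d.-tuple R)
  (u2 : Th2 -> d.-tuple R -> R -> R -> d.-tuple R) (th : Th1 * Th2) : \bar R :=
  (\int[@lebesgue_measure R]_(t in `[0%R, 1%R]) \int[@lebesgue_measure R]_(r in `[0%R, 1%R])
     \int[pushforward P (interp alpha beta X Eps t)]_(z in [set: d.-tuple R])
        (sqnorm (vsub (u1 th.1 z r t) (vbar z r t)))%:E
  + \int[@lebesgue_measure R]_(t in `[0%R, 1%R]) \int[@lebesgue_measure R]_(r in `[0%R, 1%R])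
     \int[pushforward P (interp alpha beta X Eps t)]_(z in [set: d.-tuple R])
        (sqnorm (vsub (u2 th.2 z r t) (abar z r t)))%:E)%E.

(* loss L_SOM: t, r ~ U[0,1], (x, eps) ~ P, z_t = alpha_t x + beta_t eps,
   targets given as (stop-gradient) functions tv, ta of (z_t, r, t) *)
Definition L_SOM {R : realType} {d : nat} {dO} {O : measurableType dO}
  (P : probability O R) (alpha beta : R -> R) (X Eps : O -> d.-tuple R)
  (tv ta : d.-tuple R -> R -> R -> d.-tuple R)
  (Th1 Th2 : Type) (u1 : Th1 -> d.-tuple R -> R -> R -> d.-tuple R)
  (u2 : Th2 -> d.-tuple R -> R -> R -> d.-tuple R) (th : Th1 * Th2) : \bar R :=
  (\int[@lebesgue_measure R]_(t in `[0%R, 1%R]) \int[@lebesgue_measure R]_(r in `[0%R, 1%R])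
     \int[P]_(om in [set: O])
        (sqnorm (vsub (u1 th.1 (interp alpha beta X Eps t om) r t)
                      (tv (interp alpha beta X Eps t om) r t)))%:E
  + \int[@lebesgue_measure R]_(t in `[0%R, 1%R]) \int[@lebesgue_measure R]_(r in `[0%R, 1%R])
     \int[P]_(om in [set: O])
        (sqnorm (vsub (u2 th.2 (interp alpha beta X Eps t om) r t)
                      (ta (interp alpha beta X Eps t om) r t)))%:E)%E.

Definition equiv_losses {R : realType} {Th : Type} (L1 L2 : Th -> \bar R) : Prop :=
  exists C : R, forall th, L1 th = (L2 th + C%:E)%E.

(* The MeanFlow identity: for continuous [f] and [r <> t], differentiating
   [(t - r) * wbar(t) = \int_r^t f] in [t] gives [wbar(t) = f(t) - (t - r) wbar'(t)].
   Along a trajectory of the flow, the average of [v] (resp. [a]) over [[r, s]]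
   is such a [wbar(s)], so the targets [v - (t - r) d/dt vbar] and
   [a - (t - r) d/dt abar] coincide pointwise with [vbar] and [abar].  The two
   losses then differ only in how the expectation over [z_t] is written, and
   the change of variables [z_t = alpha_t x + beta_t eps] identifies them: they
   are equal, i.e. equivalent with constant 0.  Only the group property of the
   flow is used: neither its differential equation, nor the description of
   [v], [a] as conditional expectations, nor the law of [(x, eps)] plays a
   role. *)

From HB Require Import structures.
From mathcomp Require Import all_boot all_order all_algebra.
From mathcomp Require Import all_classical all_reals all_analysis.
From mathcomp Require Import measurable_realfun.
From mathcomp Require Import ring lra.
Import Order.TTheory GRing.Theory Num.Theory.
Import numFieldNormedType.Exports.
Local Open Scope classical_set_scope.
Local Open Scope ring_scope.

Section oriented_integral.
Context {R : realType}.
Notation mu := (@lebesgue_measure R).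
Variable f : R -> R.
Hypothesis cf : continuous f.

Lemma continuous_integrable_itv x y : mu.-integrable `[x, y] (EFin \o f).
Proof.
apply: continuous_compact_integrable; first exact: segment_compact.
exact: continuous_subspaceT.
Qed.

Lemma Rintegral_itv_parameterized {a x y} : a <= x -> x <= y ->
  Rintegral mu `[x, y] f =
  parameterized_integral mu a y f - parameterized_integral mu a x f.
Proof.
move=> ax xy; rewrite /parameterized_integral.
rewrite (@Rintegral_itvB _ f (BLeft a) (BRight y) x) //; last first.
  exact: continuous_integrable_itv.
rewrite Rintegral_itv_obnd_cbnd //.
apply: integrableS (continuous_integrable_itv x y) => //.
exact: subset_itv_oc_cc.
Qed.

Lemma oint_parameterized {a x y} : a <= x -> a <= y ->
  oint x y f = parameterized_integral mu a y f - parameterized_integral mu a x f.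
Proof.
move=> ax ay; rewrite /oint; case: ifPn => [|/negbTE yx].
  exact: Rintegral_itv_parameterized.
by rewrite (Rintegral_itv_parameterized ay) ?opprB // ltW // ltNge yx.
Qed.

Lemma is_derive_oint (r t : R) : is_derive t 1 (fun s => oint r s f) (f t).
Proof.
pose a := Num.min r t - 1.
have [mr mt] : Num.min r t <= r /\ Num.min r t <= t.
  by rewrite !ge_min !lexx orbT.
have ar : a <= r by rewrite /a; lra.
have at_ : a < t by rewrite /a; lra.
pose F := parameterized_integral mu a ^~ f.
have [dF dFt] : derivable F t 1 /\ derive1 F t = f t.
  apply: (@continuous_FTC1_closed _ _ _ _ (t + 1)) => //.
  - by rewrite ltrDl.
  - exact: continuous_integrable_itv.
  - exact: cf.
have dFr : is_derive t 1 (F \- cst (F r)) (f t).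
  rewrite -[f t]subr0; apply: is_deriveB.
  by apply: DeriveDef; rewrite // -derive1E.
apply: near_eq_is_derive dFr; near=> s.
rewrite /= (oint_parameterized ar) //; apply: ltW.
by near: s; exact: lt_nbhsr.
Unshelve. all: by end_near.
Qed.

Lemma oint_mean_identity (r t : R) : r != t ->
  (t - r)^-1 * oint r t f =
  f t - (t - r) * derive1 (fun s => (s - r)^-1 * oint r s f) t.
Proof.
move=> rt; have tr0 : t - r != 0 by rewrite subr_eq0 eq_sym.
have dsr : is_derive t (1 : R) (fun s => s - r) 1.
  by rewrite -[X in is_derive _ _ _ X]subr0; apply: is_deriveB.
have dinv : is_derive t (1 : R) (fun s => (s - r)^-1) (- (t - r) ^- 2).
  apply: DeriveDef; first exact: derivableV.
  by rewrite deriveV // derive_val /GRing.scale /= mulr1.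
have dprod := is_deriveM dinv (is_derive_oint r t).
rewrite derive1E (@derive_val _ _ _ _ _ _ _ dprod) /GRing.scale /=.
by field.
Qed.

End oriented_integral.

Section meanflow_target.
Context {R : realType} {d : nat}.
Variables (w : d.-tuple R -> R -> d.-tuple R) (Phi : d.-tuple R -> R -> R -> d.-tuple R).
Hypothesis Phi_id : forall z t, Phi z t t = z.
Hypothesis Phi_comp : forall z t s tau, Phi (Phi z t s) s tau = Phi z t tau.
Hypothesis w_cont : forall z t (i : 'I_d), continuous (fun tau => tnth (w (Phi z t tau) tau) i).

Lemma avg_field_along_flow z t r s (i : 'I_d) : s != r ->
  tnth (avg_field w Phi (Phi z t s) r s) i =
  (s - r)^-1 * oint r s (fun tau => tnth (w (Phi z t tau) tau) i).
Proof.
move=> sr; rewrite /avg_field eq_sym (negbTE sr) tnth_mktuple.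
by under eq_fun do rewrite Phi_comp.
Qed.

Lemma mf_target_avg_field : mf_target w Phi = avg_field w Phi.
Proof.
apply/funext => z; apply/funext => r; apply/funext => t.
apply: eq_from_tnth => i; rewrite tnth_mktuple.
have [<-|rt] := eqVneq r t; first by rewrite /avg_field eqxx subrr mul0r subr0.
rewrite {2}/avg_field (negbTE rt) tnth_mktuple.
rewrite (oint_mean_identity _ (w_cont z t i) _ _ rt) Phi_id !derive1E.
congr (_ - _ * _); apply: near_eq_derive; near=> s.
apply: avg_field_along_flow.
near: s; apply: (@open_nbhs_nbhs _ _ [set s | s != r]); split; first exact: open_neq.
by rewrite /= eq_sym.
Unshelve. all: by end_near.
Qed.

End meanflow_target.

Lemma sqnorm_ge0 {R : realType} {d : nat} (x : d.-tuple R) : 0 <= sqnorm x.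
Proof. by apply: sumr_ge0 => i _; exact: sqr_ge0. Qed.

Lemma measurable_sqnorm {R : realType} {d : nat} :
  measurable_fun [set: d.-tuple R] sqnorm.
Proof.
apply: measurable_sum => i.
exact: measurable_funX (measurable_tnth i).
Qed.

Section measurable_tuple_ops.
Context {R : realType} {d : nat} {dT : measure_display} {T : measurableType dT}.
Variables f g : T -> d.-tuple R.
Hypotheses (mf : measurable_fun [set: T] f) (mg : measurable_fun [set: T] g).

Lemma measurable_vadd : measurable_fun [set: T] (fun x => vadd (f x) (g x)).
Proof.
apply/measurable_fun_tnthP => i.
rewrite (_ : _ \o _ = (fun x => tnth (f x) i + tnth (g x) i)); last first.
  by apply/funext => x; rewrite /= tnth_mktuple.
by apply: measurable_funD; exact: measurableT_comp (measurable_tnth i) _.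
Qed.

Lemma measurable_vsub : measurable_fun [set: T] (fun x => vsub (f x) (g x)).
Proof.
apply/measurable_fun_tnthP => i.
rewrite (_ : _ \o _ = (fun x => tnth (f x) i - tnth (g x) i)); last first.
  by apply/funext => x; rewrite /= tnth_mktuple.
by apply: measurable_funB; exact: measurableT_comp (measurable_tnth i) _.
Qed.

Lemma measurable_vscale (c : R) : measurable_fun [set: T] (fun x => vscale c (f x)).
Proof.
apply/measurable_fun_tnthP => i.
rewrite (_ : _ \o _ = (fun x => c * tnth (f x) i)); last first.
  by apply/funext => x; rewrite /= tnth_mktuple.
by apply: measurable_funM => //; exact: measurableT_comp (measurable_tnth i) _.
Qed.

End measurable_tuple_ops.

Lemma measurable_interp {R : realType} {d : nat} {dO : measure_display}
  {O : measurableType dO} (alpha beta : R -> R) (X Eps : O -> d.-tuple R) t :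
  measurable_fun [set: O] X -> measurable_fun [set: O] Eps ->
  measurable_fun [set: O] (interp alpha beta X Eps t).
Proof.
by move=> mX mEps; apply: measurable_vadd; exact: measurable_vscale.
Qed.

Section loss_change_of_variables.
Context {R : realType} {d : nat} {dO : measure_display} {O : measurableType dO}.
Variables (P : probability O R) (alpha beta : R -> R) (X Eps : O -> d.-tuple R).
Hypotheses (mX : measurable_fun [set: O] X) (mEps : measurable_fun [set: O] Eps).
Notation z_ := (interp alpha beta X Eps).

Lemma integral_interp_pushforward (g : R -> R -> d.-tuple R -> R) :
  (forall t r, measurable_fun [set: d.-tuple R] (g t r)) ->
  (forall t r z, 0 <= g t r z) ->
  (\int[lebesgue_measure]_(t in `[0%R, 1%R]) \int[lebesgue_measure]_(r in `[0%R, 1%R])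
     \int[P]_(om in [set: O]) (g t r (z_ t om))%:E =
   \int[lebesgue_measure]_(t in `[0%R, 1%R]) \int[lebesgue_measure]_(r in `[0%R, 1%R])
     \int[pushforward P (z_ t)]_(z in [set: d.-tuple R]) (g t r z)%:E)%E.
Proof.
move=> mg g0; apply: eq_integral => t _; apply: eq_integral => r _.
rewrite ge0_integral_pushforward ?preimage_setT //.
- exact: measurable_interp.
- exact/measurable_EFinP.
- by move=> z _; rewrite lee_fin.
Qed.

Lemma L_SOM_pushforward (tv ta : d.-tuple R -> R -> R -> d.-tuple R)
  (Th1 Th2 : Type) (u1 : Th1 -> d.-tuple R -> R -> R -> d.-tuple R)
  (u2 : Th2 -> d.-tuple R -> R -> R -> d.-tuple R) th :
  (forall r t, measurable_fun [set: d.-tuple R] (fun z => tv z r t)) ->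
  (forall r t, measurable_fun [set: d.-tuple R] (fun z => ta z r t)) ->
  (forall th r t, measurable_fun [set: d.-tuple R] (fun z => u1 th z r t)) ->
  (forall th r t, measurable_fun [set: d.-tuple R] (fun z => u2 th z r t)) ->
  L_SOM P alpha beta X Eps tv ta u1 u2 th =
  L_SOM_star P alpha beta X Eps tv ta u1 u2 th.
Proof.
move=> mtv mta mu1 mu2; apply: (f_equal2 (fun x y => (x + y)%E)).
- apply: (integral_interp_pushforward
    (fun t r z => sqnorm (vsub (u1 th.1 z r t) (tv z r t)))) => [t r|t r z].
    by apply: measurableT_comp measurable_sqnorm _; exact: measurable_vsub.
  exact: sqnorm_ge0.
- apply: (integral_interp_pushforward
    (fun t r z => sqnorm (vsub (u2 th.2 z r t) (ta z r t)))) => [t r|t r z].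
    by apply: measurableT_comp measurable_sqnorm _; exact: measurable_vsub.
  exact: sqnorm_ge0.
Qed.

End loss_change_of_variables.

Theorem theorem3p22
  (R : realType) (d : nat) (dO : measure_display) (O : measurableType dO)
  (P : probability O R) (X Eps : O -> d.-tuple R)
  (mu : d.-tuple R) (sigma : R) (alpha beta : R -> R)
  (v a : d.-tuple R -> R -> d.-tuple R)
  (Phi : d.-tuple R -> R -> R -> d.-tuple R)
  (Th1 Th2 : Type)
  (u1 : Th1 -> d.-tuple R -> R -> R -> d.-tuple R)
  (u2 : Th2 -> d.-tuple R -> R -> R -> d.-tuple R) :
  (* data and noise *)
  measurable_fun [set: O] X -> measurable_fun [set: O] Eps ->
  indep2 P X Eps ->
  0 < sigma -> iso_gaussian P Eps mu sigma ->
  (* interpolation functions, twice differentiable *)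
  alpha 0 = 1 -> beta 1 = 1 -> alpha 1 = 0 -> beta 0 = 0 ->
  (forall t, derivable alpha t 1 /\ derivable (derive1 alpha) t 1) ->
  (forall t, derivable beta t 1 /\ derivable (derive1 beta) t 1) ->
  (* marginal velocity and acceleration: E[v_t | z_t = z], E[a_t | z_t = z] *)
  (forall t, 0 <= t <= 1 ->
     cond_exp_version P
       (fun om => vadd (vscale (derive1 alpha t) (X om)) (vscale (derive1 beta t) (Eps om)))
       (interp alpha beta X Eps t) (fun z => v z t)) ->
  (forall t, 0 <= t <= 1 ->
     cond_exp_version P
       (fun om => vadd (vscale (derive1 (derive1 alpha) t) (X om)) (vscale (derive1 (derive1 beta) t) (Eps om)))
       (interp alpha beta X Eps t) (fun z => a z t)) ->
  (* Phi is the flow of the marginal velocity field *)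
  (forall z t, Phi z t t = z) ->
  (forall z t s tau, Phi (Phi z t s) s tau = Phi z t tau) ->
  (forall z t tau (i : 'I_d), derivable (fun s => tnth (Phi z t s) i) tau 1 /\
     derive1 (fun s => tnth (Phi z t s) i) tau = tnth (v (Phi z t tau) tau) i) ->
  (* smoothness / regularity *)
  (forall z t (i : 'I_d), continuous (fun tau => tnth (v (Phi z t tau) tau) i)) ->
  (forall z t (i : 'I_d), continuous (fun tau => tnth (a (Phi z t tau) tau) i)) ->
  (forall r t, measurable_fun [set: d.-tuple R] (fun z => avg_field v Phi z r t)) ->
  (forall r t, measurable_fun [set: d.-tuple R] (fun z => avg_field a Phi z r t)) ->
  (forall th r t, measurable_fun [set: d.-tuple R] (fun z => u1 th z r t)) ->
  (forall th r t, measurable_fun [set: d.-tuple R] (fun z => u2 th z r t)) ->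
  equiv_losses
    (L_SOM P alpha beta X Eps (mf_target v Phi) (mf_target a Phi) u1 u2)
    (L_SOM_star P alpha beta X Eps (avg_field v Phi) (avg_field a Phi) u1 u2).
Proof.
move=> mX mEps _ _ _ _ _ _ _ _ _ _ _ Phi_id Phi_comp _ v_cont a_cont.
move=> mvbar mabar mu1 mu2; exists 0 => th; rewrite adde0.
rewrite (mf_target_avg_field _ _ Phi_id Phi_comp v_cont).
rewrite (mf_target_avg_field _ _ Phi_id Phi_comp a_cont).
exact: L_SOM_pushforward.
Qed.
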